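(* Let $\mathbb{K}=(G,M,I)$ be a formal context and $A,B\in\operatorname{Ext}(\mathbb{K})$ with $A\prec_{\operatorname{Ext}(\mathbb{K})}B$. If $A$ is meet-irreducible in $\operatorname{Ext}(\mathbb{K})$, then $\mathcal{F}_{A,B}\cap\operatorname{Ext}(\mathbb{K})$ is a maximal meet-irreducible element of the lattice ${\downarrow}\operatorname{Ext}(\mathbb{K})$ of all closure systems on $G$ contained in $\operatorname{Ext}(\mathbb{K})$, ordered by inclusion.
   Context: A formal context is a triple $(G,M,I)$ with finite nonempty sets $G$, $M$ and $I\subseteq G\times M$; derivations $A'=\{m\mid\forall a\in A:(a,m)\in I\}$, $B'=\{g\mid\forall b\in B:(g,b)\in I\}$. $\operatorname{Ext}(\mathbb{K})=\{A\subseteq G\mid A''=A\}$, a lattice under inclusion with meet = intersection. A closure system on $G$ is a family of subsets of $G$ containing $G$ and closed under intersections. $\prec_{\operatorname{Ext}(\mathbb{K})}$ is the covering relation of $(\operatorname{Ext}(\mathbb{K}),\subseteq)$. $\mathcal{F}_{A,B}=\{D\subseteq G\mid A\not\subseteq D\ \text{or}\ B\subseteq D\}$. An element $x$ of a lattice is meet-irreducible if $x\neq\top$ and $x=\bigwedge Y$ implies $x\in Y$. *)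

From mathcomp Require Import all_boot.
Set Implicit Arguments. Unset Strict Implicit. Unset Printing Implicit Defensive.

Section FCA.
Variables (G M : finType) (I : {set G * M}).

Definition derG (A : {set G}) : {set M} := [set m | [forall a in A, (a, m) \in I]].
Definition derM (B : {set M}) : {set G} := [set g | [forall b in B, (g, b) \in I]].

Definition Ext : {set {set G}} := [set A | derM (derG A) == A].

Definition FAB (A B : {set G}) : {set {set G}} :=
  [set D : {set G} | ~~ (A \subset D) || (B \subset D)].
End FCA.

Definition closure_system (G : finType) (C : {set {set G}}) : bool :=
  ([set: G] \in C) &&
  [forall F : {set {set G}}, (F \subset C) ==> (\bigcap_(X in F) X \in C)].

Definition covers (T : finType) (L : {set {set T}}) (x y : {set T}) : Prop :=
  [/\ x \in L, y \in L, x \proper y &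
      forall z, z \in L -> x \proper z -> ~ z \proper y].

Definition is_inf (T : finType) (L : {set {set T}}) (Y : {set {set T}})
  (x : {set T}) : Prop :=
  [/\ x \in L, (forall y, y \in Y -> x \subset y) &
      forall z, z \in L -> (forall y, y \in Y -> z \subset y) -> z \subset x].

Definition is_top (T : finType) (L : {set {set T}}) (x : {set T}) : Prop :=
  x \in L /\ forall z, z \in L -> z \subset x.

Definition meet_irreducible (T : finType) (L : {set {set T}}) (x : {set T}) : Prop :=
  [/\ x \in L, ~ is_top L x &
      forall Y : {set {set T}}, Y \subset L -> is_inf L Y x -> x \in Y].

Definition maximal_meet_irreducible (T : finType) (L : {set {set T}}) (x : {set T}) : Prop :=
  meet_irreducible L x /\
  forall y, meet_irreducible L y -> x \subset y -> y = x.

Definition downExt (G M : finType) (I : {set G * M}) : {set {set {set G}}} :=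
  [set C | closure_system C && (C \subset Ext I)].

From mathcomp Require Import all_boot.
Set Implicit Arguments. Unset Strict Implicit. Unset Printing Implicit Defensive.

(* An extent D with A \subset D but not B \subset D equals A: D :&: B is an
   extent strictly below B and containing A, hence equal to A since B covers A,
   and meet-irreducibility of A = D :&: B forces D = A.  Therefore
   F_{A,B} :&: Ext(K) = Ext(K) :\ A.  Being an intersection of two closure
   systems it lies in the lattice of closure systems below Ext(K), where it is a
   coatom under the top Ext(K); coatoms are meet-irreducible, and maximal among
   meet-irreducibles because only the top lies strictly above them. *)

Lemma proper_setD1_eq (T : finType) (L C : {set T}) (a : T) :
  L :\ a \proper C -> C \subset L -> C = L.
Proof.
move=> /properP[sLaC [c Cc cN]] sCL; apply/eqP; rewrite eqEsubset sCL /=.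
have Lc := subsetP sCL c Cc.
have ca : c = a by apply/eqP; move: cN; rewrite !inE Lc andbT negbK.
rewrite ca in Cc Lc.
by rewrite -(setD1K Lc) subUset sub1set Cc sLaC.
Qed.

Section Coatom.
Variables (T : finType) (L : {set {set T}}) (t x : {set T}).
Hypotheses (topLt : is_top L t) (Lx : x \in L) (x_neq_t : x != t).
Hypothesis coatom_x : forall z, z \in L -> x \proper z -> z = t.

Lemma subset_top_coatomF : t \subset x = false.
Proof.
case: topLt => _ sub_t; apply/negP => sub_tx.
by move/negP: x_neq_t; apply; rewrite eqEsubset sub_t.
Qed.

Lemma coatom_not_top : ~ is_top L x.
Proof. by case: topLt => Lt _ [_ /(_ t Lt)]; rewrite subset_top_coatomF. Qed.

Lemma coatom_meet_irreducible : meet_irreducible L x.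
Proof.
split=> [||Y sYL [_ lbY glbY]]; [by [] | exact: coatom_not_top |].
apply/negPn/negP => xNY.
have Yt y : y \in Y -> y = t.
  move=> Yy; apply: coatom_x; first exact: subsetP sYL y Yy.
  by rewrite properEneq lbY // andbT; apply: contraNneq xNY => ->.
suff: t \subset x by rewrite subset_top_coatomF.
by case: topLt => Lt _; apply: glbY => // y /Yt ->.
Qed.

Lemma coatom_maximal_meet_irreducible : maximal_meet_irreducible L x.
Proof.
split=> [|y [Ly ytop _] xy]; first exact: coatom_meet_irreducible.
apply/eqP; rewrite eq_sym; apply: contraT => x_neq_y.
by case: ytop; rewrite (coatom_x Ly) // properEneq x_neq_y.
Qed.

End Coatom.

Section ClosureSystem.
Variable T : finType.

Lemma closure_systemI (C1 C2 : {set {set T}}) :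
  closure_system C1 -> closure_system C2 -> closure_system (C1 :&: C2).
Proof.
case/andP=> C1T /forall_inP C1cap /andP[C2T /forall_inP C2cap].
rewrite /closure_system inE C1T C2T; apply/forall_inP => F.
by rewrite subsetI inE => /andP[/C1cap -> /C2cap ->].
Qed.

Lemma closure_system_setI (C : {set {set T}}) (X Y : {set T}) :
  closure_system C -> X \in C -> Y \in C -> X :&: Y \in C.
Proof.
case/andP=> _ /forall_inP Ccap CX CY.
have := Ccap [set X; Y]; rewrite bigcap_setU !big_set1; apply.
by apply/subsetP => Z; rewrite !inE => /orP[] /eqP ->.
Qed.

Lemma closure_system_FAB (A B : {set T}) : closure_system (FAB A B).
Proof.
rewrite /closure_system inE !subsetT orbT; apply/forall_inP => F sFAB.
rewrite inE; apply/orP; case: (boolP (A \subset _)) => [sAF|]; [right|by left].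
apply/bigcapsP => D FD; move/subsetP/(_ D FD): sFAB.
by rewrite inE (subset_trans sAF (bigcap_inf _ FD)).
Qed.

End ClosureSystem.

Lemma is_inf_set2 (T : finType) (L : {set {set T}}) (X Y : {set T}) :
  X :&: Y \in L -> is_inf L [set X; Y] (X :&: Y).
Proof.
split=> [//|Z|Z _ lbZ].
  by rewrite !inE => /orP[] /eqP ->; rewrite ?subsetIl ?subsetIr.
by rewrite subsetI !lbZ // !inE eqxx ?orbT.
Qed.

Section CoveredMeetIrreducible.
Variables (T : finType) (L : {set {set T}}) (A B : {set T}).
Hypotheses (closedL : closure_system L) (coverAB : covers L A B).
Hypothesis irrA : meet_irreducible L A.

Lemma covered_meet_irreducible_eq (D : {set T}) :
  D \in L -> A \subset D -> ~~ (B \subset D) -> D = A.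
Proof.
move=> LD sAD nsBD; case: coverAB => LA LB ltAB no_between.
have LDB : D :&: B \in L by exact: closure_system_setI.
have DB_eq_A : D :&: B = A.
  apply/eqP; rewrite eq_sym eqEproper subsetI sAD (proper_sub ltAB) /=.
  apply/negP => ltA_DB; apply: (no_between _ LDB ltA_DB).
  by rewrite properEneq subsetIr andbT; apply: contraNneq nsBD => <-; rewrite subsetIl.
have : A \in [set D; B].
  case: irrA => _ _; apply; last by rewrite -DB_eq_A; exact: is_inf_set2.
  by apply/subsetP => Z; rewrite !inE => /orP[] /eqP ->.
rewrite !inE => /orP[/eqP -> // | /eqP eq_AB].
by move: ltAB; rewrite eq_AB properxx.
Qed.

Lemma FAB_setI_covered : FAB A B :&: L = L :\ A.
Proof.
apply/setP => D; rewrite !inE; have [LD|_] := boolP (D \in L); rewrite ?andbT ?andbF //.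
case: (eqVneq D A) => [->|neq_DA]; last first.
  apply: contraNT neq_DA; rewrite negb_or !negbK => /andP[sAD nsBD].
  by apply/eqP; exact: covered_meet_irreducible_eq.
by case: coverAB => _ _ ltAB _; rewrite subxx (negbTE (proper_subn ltAB)).
Qed.

End CoveredMeetIrreducible.

Section FormalContext.
Variables (G M : finType) (I : {set G * M}).

Lemma derG_anti (S T : {set G}) : S \subset T -> derG I T \subset derG I S.
Proof.
move=> sST; apply/subsetP => m; rewrite !inE => /forall_inP Tm.
by apply/forall_inP => a /(subsetP sST) /Tm.
Qed.

Lemma derM_anti (S T : {set M}) : S \subset T -> derM I T \subset derM I S.
Proof.
move=> sST; apply/subsetP => g; rewrite !inE => /forall_inP Tg.
by apply/forall_inP => m /(subsetP sST) /Tg.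
Qed.

Lemma sub_derMG (S : {set G}) : S \subset derM I (derG I S).
Proof.
apply/subsetP => g Sg; rewrite inE; apply/forall_inP => m.
by rewrite inE => /forall_inP; apply.
Qed.

Lemma closure_system_Ext : closure_system (Ext I).
Proof.
rewrite /closure_system inE eqEsubset subsetT sub_derMG /=.
apply/forall_inP => F sFExt; rewrite inE eqEsubset sub_derMG andbT.
apply/bigcapsP => X FX; have /subsetP/(_ X FX) := sFExt; rewrite inE => /eqP <-.
exact/derM_anti/derG_anti/bigcap_inf.
Qed.

Lemma is_top_downExt : is_top (downExt I) (Ext I).
Proof.
split=> [|C]; first by rewrite inE closure_system_Ext subxx.
by rewrite inE => /andP[].
Qed.

End FormalContext.

Theorem proposition5 (G M : finType) (I : {set G * M})
  (HG : 0 < #|G|) (HM : 0 < #|M|) (A B : {set G}) :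
  A \in Ext I -> B \in Ext I ->
  covers (Ext I) A B ->
  meet_irreducible (Ext I) A ->
  maximal_meet_irreducible (downExt I) (FAB A B :&: Ext I).
Proof.
move=> _ _ coverAB irrA.
have closedExt := closure_system_Ext I.
have down_FAB : FAB A B :&: Ext I \in downExt I.
  by rewrite inE closure_systemI ?closure_system_FAB // subsetIr.
rewrite FAB_setI_covered // in down_FAB *.
have [ExtA _ _ _] := coverAB.
apply: coatom_maximal_meet_irreducible (is_top_downExt I) down_FAB _ _.
  by apply: contraTneq ExtA => <-; rewrite setD11.
by move=> C; rewrite inE => /andP[_ sCExt] ltC; exact: proper_setD1_eq ltC sCExt.
Qed.
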